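(* In the second phase of the algorithm EM-GenPA (described in the context), processing the host requests sorted in ascending order by requested degree first and by new node (equivalently, time) second yields the same output distribution as processing them in ascending order of time; i.e., it correctly retains the output distribution of general preferential attachment.
   Context: General preferential attachment: start from a seed graph $G_0=(V_0,E_0)$ with $n_0$ nodes; iteratively add $N$ new nodes $v_{n_0+1},\dots,v_{n_0+N}$, each connected to $\ell\le n_0$ different earlier nodes (hosts), where a node $h$ of degree $d$ is chosen as host with probability proportional to $f(d)$ for a function $f:\mathbb N\to\mathbb R$. EM-GenPA works in two phases. Phase 1 samples, for each new node $v_{n_0+i}$ and each $j\in\{1,\dots,\ell\}$, only the degree $d_j$ of its $j$-th host (using counters of how many nodes currently have each degree), producing a host request $(v_{n_0+i},j,d_j)$ with time $t=\ell i+j$. Phase 2 resolves the requests: let $M(d,t)$ be the set of nodes having degree $d$ after time $t$, with $M(d,0)$ the seed nodes of degree $d$, and new node $v_{n_0+i}$ entering the set of degree-$\ell$ nodes at time $\ell(i+1)$. Processing a request for degree $d$ at time $t$ picks a node $u$ uniformly at random from $M(d,t-1)$, connects it to the requesting new node, and sets $M(d,t)=M(d,t-1)\setminus\{u\}$ and $M(d+1,t)=M(d+1,t-1)\cup\{u\}$. *)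

From mathcomp Require Import all_boot all_algebra.
Set Implicit Arguments. Unset Strict Implicit. Unset Printing Implicit Defensive.
Import GRing.Theory Num.Theory.
Local Open Scope nat_scope.

Section EMGenPA.
(* n0 seed nodes, N new nodes, each new node issues l host requests. *)
Variables (n0 N l : nat).
Variable e : rel 'I_n0.

(* All nodes: seed nodes 0..n0-1, new node v_{n0+i} is rshift n0 i, i : 'I_N
   (0-based indexing of new nodes). *)
Definition node : finType := 'I_(n0 + N).
(* Host request (v_{n0+i}, j) ; j : 'I_l is the 0-based version of j in 1..l. *)
Definition req : finType := ('I_N * 'I_l)%type.

(* Time of request (i, j): t = l*i + (j+1), so times are 1 .. l*N. *)
Definition time (r : req) : nat := (l * r.1 + r.2).+1.

Definition newnode (i : 'I_N) : node := rshift n0 i.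

Definition seed_deg (v : 'I_n0) : nat := #|[set w | e v w]|.

Definition initM (d : nat) : {set node} :=
  [set u : node | if split u is inl s then seed_deg s == d else false].

(* Requested degrees d_j of the hosts, produced by phase 1. *)
Variable dq : req -> nat.

(* Given the outcome f (host chosen for each request), the sets M(d,t)
   exactly as in the definition: at time t the request with time t moves its
   chosen host u from M(d,t-1) to M(d+1,t); the new node v_{n0+i} enters the
   set of degree-l nodes at time l(i+1). *)
Fixpoint Mset (f : req -> node) (t : nat) : nat -> {set node} :=
  match t with
  | 0 => initM
  | t'.+1 =>
      let M := Mset f t' in
      let M1 := match [pick r : req | time r == t] with
                | Some r =>
                    fun d => if d == dq r then M d :\ f r
                             else if d == (dq r).+1 then f r |: M d
                             else M d
                | None => M
                end in
      match [pick i : 'I_N | l * i.+1 == t] with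
      | Some i => fun d => if d == l then newnode i |: M1 d else M1 d
      | None => M1
      end
  end.

(* Probability that time-ordered processing (each request at time t picks its
   host uniformly from M(d_t, t-1)) produces the host assignment f. *)
Definition pmf_time (f : {ffun req -> node}) : rat :=
  (\prod_(r : req)
     (let C := Mset f (time r).-1 (dq r) in
      if f r \in C then ((#|C|%:R)^-1)%R else 0%R))%R.

(* Partial assignment: the hosts chosen so far by already-processed requests. *)
Definition partial := req -> option node.

Definition upd (g : partial) (r : req) (u : node) : partial :=
  fun r' => if r' == r then Some u else g r'.

(* The set M(d, t-1) as maintained by the algorithm from the information
   available so far: nodes that entered degree d at some time <= t-1 (seed
   nodes of degree d, new nodes when d = l, and hosts chosen by an
   already-processed request of degree d-1 at time <= t-1) and that were not
   removed by an already-processed request of degree d at time <= t-1. *)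
Definition cand (g : partial) (d t : nat) : {set node} :=
  [set u : node |
     [|| u \in initM d,
         (d == l) && (if split u is inr i then l * i.+1 < t else false)
       | (0 < d) && [exists r : req, [&& g r == Some u, dq r == d.-1 & time r < t]]]
     && ~~ [exists r : req, [&& g r == Some u, dq r == d & time r < t]]].

(* Sequential processing of a list of requests; the probability that the
   hosts picked are those given by f. *)
Fixpoint run (s : seq req) (g : partial) (f : req -> node) : rat :=
  match s with
  | [::] => 1%R
  | r :: s' =>
      let C := cand g (dq r) (time r) in
      if f r \in C then ((#|C|%:R)^-1 * run s' (upd g r (f r)) f)%R else 0%R
  end.

Definition deg_time_le (r1 r2 : req) : bool :=
  (dq r1 < dq r2)%N || ((dq r1 == dq r2) && (time r1 <= time r2)%N).

Definition sorted_reqs : seq req := sort deg_time_le (enum req).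

Definition pmf_sorted (f : {ffun req -> node}) : rat :=
  run sorted_reqs (fun _ => None) f.

End EMGenPA.

From mathcomp Require Import all_boot all_algebra zify.
Set Implicit Arguments. Unset Strict Implicit. Unset Printing Implicit Defensive.

(* As long as every request so far has picked a node
   of its requested degree, M(d, t) is the set of nodes present at time t whose
   initial degree plus the number of requests they have hosted equals d.  A
   node has then entered degree d by time t iff some degree-(d-1) request
   picked it (or it started with degree d), and has left it iff some degree-d
   request picked it; so M(d, t-1) is determined by the requests of degree d-1
   and d issued before t.  Sorting by (degree, time) resolves exactly these
   requests before the request (d, t), hence each factor of the sorted process
   equals the corresponding factor of the time-ordered one.  If some request
   picks a node of the wrong degree, the first such request contributes a zero
   factor to both products. *)

Section DegreeTracking.
Variables (n0 N l : nat) (e : rel 'I_n0) (dq : req N l -> nat).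
Variable f : req N l -> node n0 N.

Lemma time_inj : injective (@time N l).
Proof.
case=> [i1 j1] [i2 j2]; rewrite /time /= => -[eq_t].
have l_gt0 : 0 < l by have := ltn_ord j1; lia.
have eq_i : i1 = i2 :> nat.
  have := congr1 (divn^~ l) eq_t.
  by rewrite !(mulnC l) !divnMDl // !divn_small //= !addn0.
have eq_j : j1 = j2 :> nat by move: eq_t; rewrite eq_i => /addnI.
by congr pair; apply: val_inj.
Qed.

Definition chosen : partial n0 N l := fun r => Some (f r).

(* [req_at t] and [arrives_at t] are the events of the step from time t to
   t.+1, i.e. those that turn [Mset f t] into [Mset f t.+1]. *)
Definition req_at (t : nat) := [pick r : req N l | time r == t.+1].

Definition arrived (t : nat) (u : node n0 N) : bool :=
  if split u is inr i then l * i.+1 <= t else true.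

Definition arrives_at (t : nat) (u : node n0 N) : bool :=
  if split u is inr i then l * i.+1 == t.+1 else false.

Definition init_deg (u : node n0 N) : nat :=
  if split u is inl s then seed_deg e s else l.

Definition nhosted (t : nat) (u : node n0 N) : nat :=
  \sum_(r : req N l) ((f r == u) && (time r <= t)).

Definition entered (t d : nat) (u : node n0 N) : bool :=
  [|| u \in initM N e d,
      (d == l) && (if split u is inr i then l * i.+1 <= t else false)
    | (0 < d) && [exists r, [&& f r == u, dq r == d.-1 & time r <= t]]].

Definition exited (t d : nat) (u : node n0 N) : bool :=
  [exists r, [&& f r == u, dq r == d & time r <= t]].

Lemma cand_chosenE t d u :
  (u \in cand e dq chosen d t.+1) = entered t d u && ~~ exited t d u.
Proof. by rewrite inE. Qed.

Lemma exists_hostS (P : pred (req N l)) t u :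
  [exists r, [&& f r == u, P r & time r <= t.+1]] =
  [exists r, [&& f r == u, P r & time r <= t]] ||
  (if req_at t is Some r0 then (f r0 == u) && P r0 else false).
Proof.
rewrite /req_at; case: pickP => [r0 /eqP t_r0 | no_req]; last first.
  by rewrite orbF; apply: eq_existsb => r; rewrite leq_eqVlt ltnS no_req.
apply/existsP/orP => [[r /and3P[fr Pr]] | [/existsP[r /and3P[fr Pr le_rt]] | /andP[fr Pr]]].
- rewrite leq_eqVlt ltnS => /orP[/eqP t_r | le_rt].
    have <- : r = r0 by apply: time_inj; rewrite t_r t_r0.
    by right; rewrite fr Pr.
  by left; apply/existsP; exists r; rewrite fr Pr le_rt.
- by exists r; rewrite fr Pr (leq_trans le_rt).
- by exists r0; rewrite fr Pr t_r0 leqnn.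
Qed.

Lemma nhostedS t u :
  nhosted t.+1 u =
  nhosted t u + (if req_at t is Some r0 then f r0 == u else false).
Proof.
rewrite /nhosted /req_at.
have -> : \sum_(r : req N l) ((f r == u) && (time r <= t.+1)) =
    \sum_(r : req N l) (((f r == u) && (time r <= t)) + ((f r == u) && (time r == t.+1))).
  by apply: eq_bigr => r _; case: (f r == u) => //=; lia.
rewrite big_split /=; congr (_ + _).
case: pickP => [r0 /eqP t_r0 | no_req]; last by rewrite big1 // => r _; rewrite no_req !andbF.
rewrite (bigD1 r0) //= t_r0 eqxx andbT big1 ?addn0 //.
move=> r ne_r; case t_r: (time r == t.+1); last by rewrite !andbF.
by rewrite (time_inj (etrans (eqP t_r) (esym t_r0))) eqxx in ne_r.
Qed.

Hypothesis l_gt0 : 0 < l.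

Lemma arrives_atE t u :
  (if [pick i : 'I_N | l * i.+1 == t.+1] is Some i then u == newnode n0 i
   else false) = arrives_at t u.
Proof.
have splitE i : (u == newnode n0 i) = (split u == inr i).
  by rewrite (can2_eq (@splitK n0 N) (@unsplitK n0 N)).
rewrite /arrives_at; case: pickP => [i /eqP t_i | no_i]; last first.
  by case: (split u) => // i; rewrite no_i.
rewrite splitE; case: (split u) => // i'.
apply/eqP/eqP => [[->] // | t_i'].
congr inr; apply: val_inj; apply/succn_inj/eqP.
by rewrite -(eqn_pmul2l l_gt0) t_i t_i'.
Qed.

Lemma arrivedS t u : arrived t.+1 u = arrived t u || arrives_at t u.
Proof. by rewrite /arrived /arrives_at; case: (split u) => // i; rewrite leq_eqVlt ltnS orbC. Qed.

Lemma arrives_at_not_arrived t u : arrives_at t u -> ~~ arrived t u.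
Proof. by rewrite /arrived /arrives_at; case: (split u) => // i /eqP ->; rewrite ltnn. Qed.

Lemma arrives_at_init_deg t u : arrives_at t u -> init_deg u = l.
Proof. by rewrite /arrives_at /init_deg; case: (split u). Qed.

Lemma enteredS t d u :
  entered t.+1 d u = [|| entered t d u, (d == l) && arrives_at t u |
     (0 < d) && (if req_at t is Some r0 then (f r0 == u) && (dq r0 == d.-1) else false)].
Proof.
rewrite /entered (exists_hostS (fun r => dq r == d.-1)).
have -> : (if split u is inr i then l * i.+1 <= t.+1 else false) =
          (if split u is inr i then l * i.+1 <= t else false) || arrives_at t u.
  by rewrite /arrives_at; case: (split u) => // i; rewrite leq_eqVlt ltnS orbC.
by case: (u \in initM N e d); case: (d == l); case: (0 < d); case: (arrives_at t u);
  rewrite /= ?orbT ?orbF ?andbT ?andbF ?orbA // orbAC.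
Qed.

Lemma exitedS t d u :
  exited t.+1 d u =
  exited t d u || (if req_at t is Some r0 then (f r0 == u) && (dq r0 == d) else false).
Proof. exact: (exists_hostS (fun r => dq r == d)). Qed.

Lemma MsetS t d u :
  (u \in Mset e dq f t.+1 d) =
  ((d == l) && arrives_at t u) ||
  (if req_at t is Some r then
      (if d == dq r then (u \in Mset e dq f t d) && (u != f r)
       else if d == (dq r).+1 then (u == f r) || (u \in Mset e dq f t d)
       else u \in Mset e dq f t d)
   else u \in Mset e dq f t d).
Proof.
rewrite -arrives_atE /req_at /=.
case: pickP => [r _ | _]; case: pickP => [i _ | _] /=;
  repeat case: ifP => //=; rewrite ?inE ?andbT ?andbF //= => *; by rewrite andbC.
Qed.

Definition degree_invariant t := forall u d,
  [/\ entered t d u = arrived t u && (init_deg u <= d <= init_deg u + nhosted t u),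
      exited t d u = arrived t u && (init_deg u <= d < init_deg u + nhosted t u),
      (u \in Mset e dq f t d) = arrived t u && (d == init_deg u + nhosted t u)
    & ~~ arrived t u -> nhosted t u = 0].

Lemma degree_invariant0 : degree_invariant 0.
Proof.
move=> u d.
have nhosted0 : nhosted 0 u = 0 by rewrite /nhosted big1 // => r _; rewrite /time ltn0 andbF.
have no_host P : [exists r, [&& f r == u, P r & time r <= 0]] = false.
  by apply/existsP => -[r]; rewrite /time ltn0 !andbF.
rewrite /entered /exited !no_host nhosted0 addn0 andbF orbF /arrived /init_deg /= inE.
case: (split u) => [s|i] /=.
  by split => //; [case: eqP => [->|]; rewrite ?leqnn | ]; lia.
have pos : 0 < l * i.+1 by rewrite muln_gt0 l_gt0.
by rewrite leqNgt pos andbF.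
Qed.

(* A node arriving at time t+1 enters degree l and has hosted no request. *)
Lemma degree_invariant_arrival t u d : degree_invariant t ->
  [/\ entered t d u || (d == l) && arrives_at t u =
        (arrived t u || arrives_at t u) && (init_deg u <= d <= init_deg u + nhosted t u),
      exited t d u =
        (arrived t u || arrives_at t u) && (init_deg u <= d < init_deg u + nhosted t u),
      ((d == l) && arrives_at t u) || (u \in Mset e dq f t d) =
        (arrived t u || arrives_at t u) && (d == init_deg u + nhosted t u)
    & ~~ (arrived t u || arrives_at t u) -> nhosted t u = 0].
Proof.
move=> inv; have [inv_in inv_ex inv_M inv_0] := inv u d.
case arr: (arrives_at t u); last by rewrite !andbF !orbF inv_in inv_ex inv_M.
have not_arr := arrives_at_not_arrived arr.
rewrite inv_in inv_ex inv_M (negbTE not_arr) inv_0 // (arrives_at_init_deg arr) /= addn0.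
by split => //; [case: eqP => [->|]; rewrite ?leqnn | | rewrite andbT orbF]; lia.
Qed.

Lemma degree_invariantS t : degree_invariant t ->
  (forall r, req_at t = Some r -> f r \in Mset e dq f t (dq r)) ->
  degree_invariant t.+1.
Proof.
move=> inv valid u d.
rewrite enteredS exitedS MsetS nhostedS arrivedS.
have [inv_in inv_ex inv_M inv_0] := degree_invariant_arrival u d inv.
case req_t: (req_at t) => [r|]; last by rewrite !andbF !orbF addn0.
have := valid r req_t; have [_ _ -> _] := inv (f r) (dq r).
move=> /andP[arr_fr /eqP deg_fr].
have [-> | ne_u] := eqVneq u (f r); last first.
  rewrite /= !andbF !orbF addn0 !andbT; split => //.
  by rewrite -inv_M; congr (_ || _); case: ifP => //; case: ifP.
have not_arriving : arrives_at t (f r) = false.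
  by apply: contraTF arr_fr; exact: arrives_at_not_arrived.
have [fr_in fr_ex fr_M _] := inv (f r) d.
rewrite fr_in fr_ex fr_M arr_fr not_arriving deg_fr /=.
split => //; try lia.
by case: ifP => /eqP ?; [rewrite andbF | case: ifP => /eqP ?]; lia.
Qed.

Definition valid_upto t :=
  forall r, time r <= t -> f r \in Mset e dq f (time r).-1 (dq r).

Lemma valid_upto_invariant t : valid_upto t -> degree_invariant t.
Proof.
elim: t => [|t IH] valid; first exact: degree_invariant0.
apply: degree_invariantS.
  by apply: IH => r le_rt; apply: valid; apply: leq_trans le_rt _.
rewrite /req_at => r; case: pickP => // r' /eqP t_r' [<-].
by have := valid r'; rewrite t_r' leqnn => /(_ isT).
Qed.

Lemma cand_chosen_Mset t d : valid_upto t -> cand e dq chosen d t.+1 = Mset e dq f t d.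
Proof.
move=> valid; apply/setP => u; rewrite cand_chosenE.
have [-> -> -> _] := valid_upto_invariant valid u d.
by case: (arrived t u) => //=; lia.
Qed.

End DegreeTracking.

Section SortedRun.
Variables (n0 N l : nat) (e : rel 'I_n0) (dq : req N l -> nat).
Variable f : req N l -> node n0 N.

Definition cand_weight (r : req N l) : rat :=
  let C := cand e dq (chosen f) (dq r) (time r) in
  if f r \in C then ((#|C|%:R)^-1)%R else 0%R.

Lemma deg_time_le_trans : transitive (deg_time_le dq).
Proof. move=> a b c; rewrite /deg_time_le; lia. Qed.

Lemma deg_time_le_total : total (deg_time_le dq).
Proof. move=> a b; rewrite /deg_time_le; lia. Qed.

Lemma cand_agree (g : partial n0 N l) d t :
  (forall r, dq r <= d -> time r < t -> g r = Some (f r)) ->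
  cand e dq g d t = cand e dq (chosen f) d t.
Proof.
move=> agree; apply/setP => u; rewrite !inE.
have exE D : D <= d -> [exists r, [&& g r == Some u, dq r == D & time r < t]] =
                       [exists r, [&& chosen f r == Some u, dq r == D & time r < t]].
  move=> le_Dd; apply: eq_existsb => r.
  have [deg_r | _] := eqVneq (dq r) D; last by rewrite !andbF.
  have [lt_rt | _] := ltnP (time r) t; last by rewrite !andbF.
  by rewrite agree ?deg_r.
by rewrite !exE // leq_pred.
Qed.

(* Processing a (degree, time)-sorted list, the requests of degree at most d
   issued before t are resolved when (d, t) is reached. *)
Lemma run_sorted_prod (s : seq (req N l)) (g : partial n0 N l) :
  (forall r x, g r = Some x -> x = f r) ->
  (forall r, g r = None -> r \in s) ->
  sorted (deg_time_le dq) s ->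
  run e dq s g f = (\prod_(r <- s) cand_weight r)%R.
Proof.
elim: s g => [|r s IH] g g_f g_s sorted_s; first by rewrite big_nil.
rewrite big_cons /= /cand_weight.
have r_min : all (deg_time_le dq r) s := order_path_min deg_time_le_trans sorted_s.
have -> : cand e dq g (dq r) (time r) = cand e dq (chosen f) (dq r) (time r).
  apply: cand_agree => r' le_deg lt_time.
  case g_r': (g r') => [x|]; first by rewrite (g_f _ _ g_r').
  have := g_s _ g_r'; rewrite inE => /orP[/eqP eq_r | in_s].
    by rewrite eq_r ltnn in lt_time.
  by move/allP: r_min => /(_ _ in_s); rewrite /deg_time_le; lia.
case: ifP => _; last by rewrite GRing.mul0r.
congr (_ * _)%R; apply: IH (path_sorted sorted_s).
- by move=> r' x; rewrite /upd; case: eqP => [-> [<-] // | _]; exact: g_f.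
- move=> r'; rewrite /upd; case: eqP => // ne_r g_r'.
  by have := g_s _ g_r'; rewrite inE => /orP[/eqP |].
Qed.

End SortedRun.

Lemma pmf_sorted_prod n0 N l (e : rel 'I_n0) dq (f : {ffun req N l -> node n0 N}) :
  pmf_sorted e dq f = (\prod_(r : req N l) cand_weight e dq f r)%R.
Proof.
rewrite /pmf_sorted /sorted_reqs run_sorted_prod //.
- by rewrite (perm_big (enum (req N l))) ?big_enum // perm_sort.
- by move=> r; rewrite mem_sort mem_enum.
- exact/sort_sorted/deg_time_le_total.
Qed.

Lemma exists_first_invalid n0 N l (e : rel 'I_n0) dq (f : req N l -> node n0 N) :
  ~~ [forall r, f r \in Mset e dq f (time r).-1 (dq r)] ->
  exists2 r, f r \notin Mset e dq f (time r).-1 (dq r) & valid_upto e dq f (time r).-1.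
Proof.
move=> /forallPn[r0 bad_r0].
pose invalid_at t := [exists r, (time r == t) && (f r \notin Mset e dq f (time r).-1 (dq r))].
have : exists t, invalid_at t by exists (time r0); apply/existsP; exists r0; rewrite eqxx.
case/ex_minnP => _ /existsP[r /andP[/eqP <- bad_r]] first_r.
exists r => // r' le_r'; apply/negPn/negP => bad_r'.
have := first_r (time r'); rewrite /time in le_r' *.
by rewrite (_ : invalid_at _) => [/(_ isT)|]; [lia | apply/existsP; exists r'; rewrite eqxx].
Qed.

Theorem lemma6 (n0 N l : nat) (e : rel 'I_n0)
    (e_sym : symmetric e) (e_irr : irreflexive e) (l_le_n0 : (l <= n0)%N)
    (dq : 'I_N * 'I_l -> nat) (f : {ffun 'I_N * 'I_l -> 'I_(n0 + N)}) :
  pmf_sorted e dq f = pmf_time e dq f.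
Proof.
have weightE r : valid_upto e dq f (time r).-1 ->
    cand e dq (chosen f) (dq r) (time r) = Mset e dq f (time r).-1 (dq r).
  have l_gt0 : 0 < l by have := ltn_ord r.2; lia.
  exact: (cand_chosen_Mset l_gt0 (dq r)).
rewrite pmf_sorted_prod /pmf_time.
have [/forallP valid | /exists_first_invalid[r bad_r valid_r]] :=
  boolP [forall r, f r \in Mset e dq f (time r).-1 (dq r)].
  by apply: eq_bigr => r _; rewrite /cand_weight weightE // => r' _; exact: valid.
rewrite (bigD1 r) // [RHS](bigD1 r) //= /cand_weight weightE // (negbTE bad_r).
by rewrite !GRing.mul0r.
Qed.
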